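(* Let $N\ge 2$ be an integer and index rows and columns of $N\times N$ matrices by $0,1,\dots,N-1$. Let $H_{BH}$ be the complex symmetric tridiagonal matrix with $(H_{BH})_{n,n}={\rm i}(2n-N+1)$ and $(H_{BH})_{n-1,n}=(H_{BH})_{n,n-1}=\sqrt{n(N-n)}$ ($n=1,\dots,N-1$), and let $H_{AO}$ be the real tridiagonal matrix with $(H_{AO})_{n,n}=2n-N+1$, $(H_{AO})_{n-1,n}=\sqrt{n(N-n)}$, $(H_{AO})_{n,n-1}=-\sqrt{n(N-n)}$ ($n=1,\dots,N-1$), all other entries being zero. Let $\beta=-1+{\rm i}$ and define diagonal matrices $B_{n,n}=(-\beta)^{-n}$, $A_{n,n}=\beta^n$, and the upper triangular real matrix $R$ with entries $$R_{n,n+q}=\sqrt{\binom{n+q}{n}\binom{N-1-n}{q}},\qquad n=0,\dots,N-1,\ q=0,\dots,N-1-n,$$ and $R_{n,m}=0$ for $m<n$. Put $S=B\,R\,A$. Then $S$ is invertible, $H_{AO}=S\,H_{BH}\,S^{-1}$, and moreover $S=Q_{AO}\,Q_{BH}^{-1}$, where $Q_{BH}=D P G$ and $Q_{AO}=C P F$ with $P_{m,q}=\binom{N-1-m}{q}$, $D_{n,n}={\rm i}^n\sqrt{\binom{N-1}{n}}$, $G_{n,n}=(-{\rm i})^{N-n-1}(N-1-n)!$, $C_{n,n}=\sqrt{\binom{N-1}{n}}$, $F_{n,n}=(-1)^{N-n-1}(N-1-n)!$ (diagonal matrices; $\binom{a}{b}=0$ for $b>a$).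
   Context: $H_{BH}$ is the Bose–Hubbard Hamiltonian at its exceptional point $z=1$ and $H_{AO}$ the anharmonic-oscillator Hamiltonian at its exceptional point $\lambda=0$; $Q_{BH}$, $Q_{AO}$ are the transition matrices satisfying $H_{BH}Q_{BH}=Q_{BH}J$ and $H_{AO}Q_{AO}=Q_{AO}J$, where $J$ is the $N\times N$ nilpotent Jordan block ($J_{n,n+1}=1$, other entries zero). *)

From HB Require Import structures.
From mathcomp Require Import all_boot all_order all_algebra all_field.
Set Implicit Arguments. Unset Strict Implicit. Unset Printing Implicit Defensive.
Import Order.TTheory GRing.Theory Num.Theory.
Local Open Scope ring_scope.

Definition H_BH (N : nat) : 'M[algC]_N :=
  \matrix_(i < N, j < N)
    if i == j :> nat then 'i * ((2 * i + 1)%:R - N%:R)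
    else if j == i.+1 :> nat then sqrtC ((j * (N - j))%:R)
    else if i == j.+1 :> nat then sqrtC ((i * (N - i))%:R)
    else 0.

Definition H_AO (N : nat) : 'M[algC]_N :=
  \matrix_(i < N, j < N)
    if i == j :> nat then ((2 * i + 1)%:R - N%:R)
    else if j == i.+1 :> nat then sqrtC ((j * (N - j))%:R)
    else if i == j.+1 :> nat then - sqrtC ((i * (N - i))%:R)
    else 0.

Definition beta : algC := -1 + 'i.

Definition Bmx (N : nat) : 'M[algC]_N :=
  \matrix_(i < N, j < N) if i == j then (- beta) ^- i else 0.

Definition Amx (N : nat) : 'M[algC]_N :=
  \matrix_(i < N, j < N) if i == j then beta ^+ i else 0.

Definition Rmx (N : nat) : 'M[algC]_N :=
  \matrix_(i < N, j < N)
    if (i <= j)%N then sqrtC (('C(j, i) * 'C(N.-1 - i, j - i))%:R) else 0.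

Definition Smx (N : nat) : 'M[algC]_N := Bmx N *m Rmx N *m Amx N.

Definition Pmx (N : nat) : 'M[algC]_N :=
  \matrix_(m < N, q < N) ('C(N.-1 - m, q))%:R.

Definition Dmx (N : nat) : 'M[algC]_N :=
  \matrix_(i < N, j < N) if i == j then 'i ^+ i * sqrtC ('C(N.-1, i))%:R else 0.

Definition Gmx (N : nat) : 'M[algC]_N :=
  \matrix_(i < N, j < N)
    if i == j then (- 'i) ^+ (N - i - 1) * ((N.-1 - i)`!)%:R else 0.

Definition Cmx (N : nat) : 'M[algC]_N :=
  \matrix_(i < N, j < N) if i == j then sqrtC ('C(N.-1, i))%:R else 0.

Definition Fmx (N : nat) : 'M[algC]_N :=
  \matrix_(i < N, j < N)
    if i == j then (-1) ^+ (N - i - 1) * ((N.-1 - i)`!)%:R else 0.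

Definition Q_BH (N : nat) : 'M[algC]_N := Dmx N *m Pmx N *m Gmx N.
Definition Q_AO (N : nat) : 'M[algC]_N := Cmx N *m Pmx N *m Fmx N.

From mathcomp Require Import all_boot all_order all_algebra all_field.
From mathcomp Require Import perm ring zify.
Import GRing.Theory Num.Theory.
Set Implicit Arguments.
Unset Strict Implicit.
Unset Printing Implicit Defensive.
Local Open Scope ring_scope.

(** Conjugation by C = diag(sqrt C(N-1, k)) removes every square root.  In the
   monomial basis of the polynomials of degree < N, C S C^-1 becomes the matrix
   of the substitution p(x) |-> p(beta - x), while C H_AO C^-1 and C H_BH C^-1
   become the matrices of the operators (x+1)^2 d/dx - (N-1)(x+1) and
   -(x-i)^2 d/dx + (N-1)(x-i).  Since beta - i = -1, the substitution turns the
   second operator into the first, i.e. H_AO S = S H_BH; entrywise this is a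
   three-term identity between neighbouring binomial coefficients.  Likewise
   C S Q_BH = C Q_AO reduces, entrywise, to
   sum_k C(k,i) C(n,k) C(n-k,q) x^k = C(n,i) C(n-i,q) x^i (x+1)^(n-i-q)
   at x = beta i.  Reversing the columns of P makes it triangular with ones on
   the diagonal, so Q_AO is invertible, and then so are S and Q_BH. *)

Lemma mul_bin_trinomial n k i : (i <= k)%N ->
  ('C(n, k) * 'C(k, i) = 'C(n, i) * 'C(n - i, k - i))%N.
Proof.
move=> le_ik; have [lt_nk | le_kn] := ltnP n k.
  rewrite bin_small // mul0n; have [le_in | lt_ni] := leqP i n.
    by rewrite (@bin_small (n - i)) ?muln0 //; lia.
  by rewrite bin_small.
have le_in : (i <= n)%N by apply: leq_trans le_kn.
have facts_gt0 : (0 < i`! * (k - i)`! * (n - k)`!)%N by rewrite !muln_gt0 !fact_gt0.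
apply/eqP; rewrite -(eqn_pmul2r facts_gt0); apply/eqP.
have fact_k := bin_fact le_ik; have fact_n := bin_fact le_kn.
have fact_n' := bin_fact le_in; have fact_ni := bin_fact (leq_sub2r i le_kn).
rewrite (_ : n - i - (k - i) = n - k)%N in fact_ni; last by lia.
transitivity ('C(n, k) * ('C(k, i) * (i`! * (k - i)`!)) * (n - k)`!)%N; first by lia.
by rewrite fact_k -mulnA fact_n -fact_n' -fact_ni; lia.
Qed.

Lemma mul_bin_swap m t q :
  ('C(m, t) * 'C(m - t, q) = 'C(m, q) * 'C(m - q, t))%N.
Proof.
have := @mul_bin_trinomial m _ _ (leq_addr q t); rewrite addKn => <-.
have := @mul_bin_trinomial m _ _ (leq_addr t q); rewrite addKn => <-.
by rewrite [(q + t)%N]addnC -[in LHS](bin_sub (leq_addr q t)) addKn.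
Qed.

Lemma natr_mul_bin_left (R : pzRingType) n k :
  k.+1%:R * 'C(n, k.+1)%:R = (n%:R - k%:R) * 'C(n, k)%:R :> R.
Proof.
have [le_kn | lt_nk] := leqP k n; first by rewrite -natrB // -!natrM mul_bin_left.
by rewrite !bin_small ?mulr0 //; lia.
Qed.

Lemma natr_mul_bin_down (R : pzRingType) n k :
  n%:R * 'C(n.-1, k)%:R = (n%:R - k%:R) * 'C(n, k)%:R :> R.
Proof.
have [le_kn | lt_nk] := leqP k n; first by rewrite -natrB // -!natrM mul_bin_down.
by rewrite !bin_small ?mulr0 //; lia.
Qed.

Section BinomialSums.
Variable R : comPzSemiRingType.

Lemma sum_bin_exp (x : R) p r : (p < r)%N ->
  \sum_(t < r) 'C(p, t)%:R * x ^+ t = (x + 1) ^+ p.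
Proof.
move=> lt_pr; rewrite exprD1n (big_ord_widen r (fun t => x ^+ t *+ 'C(p, t))) //.
rewrite [RHS]big_mkcond; apply: eq_bigr => t _; rewrite mulr_natl.
by case: ltnP => // lt_pt; rewrite bin_small.
Qed.

Lemma sum_bin_trinomial_exp (x : R) n m i q : (n < m)%N ->
  \sum_(k < m) ('C(k, i) * 'C(n, k) * 'C(n - k, q))%:R * x ^+ k =
  ('C(n, i) * 'C(n - i, q))%:R * x ^+ i * (x + 1) ^+ (n - i - q).
Proof.
move=> lt_nm; have [lt_ni | le_in] := ltnP n i.
  rewrite bin_small // mul0n mul0r mul0r big1 // => k _.
  have [le_kn | lt_nk] := leqP k n; last by rewrite (bin_small lt_nk) muln0 mul0n mul0r.
  by rewrite bin_small ?mul0n ?mul0r //; lia.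
have le_im : (i <= m)%N by lia.
rewrite -(subnKC le_im) big_split_ord /= big1 ?add0r => [|k _]; last first.
  by rewrite bin_small ?mul0n ?mul0r.
rewrite -(@sum_bin_exp x (n - i - q) (m - i)) ?mulr_sumr; last by lia.
apply: eq_bigr => t _.
have -> : ('C(i + t, i) * 'C(n, i + t) * 'C(n - (i + t), q) =
          'C(n, i) * 'C(n - i, q) * 'C(n - i - q, t))%N.
  rewrite [('C(i + t, i) * _)%N]mulnC mul_bin_trinomial ?leq_addr // addKn subnDA.
  by rewrite -mulnA mul_bin_swap mulnA.
by rewrite !natrM exprD; ring.
Qed.
End BinomialSums.

Section Tridiagonal.
Variables (R : pzSemiRingType) (n : nat).
Implicit Types (sub dia sup : nat -> R) (m : nat -> nat -> R).

Definition tridiag sub dia sup : 'M[R]_n :=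
  \matrix_(i, j) if j == i :> nat then dia i
                 else if j == i.+1 :> nat then sup j
                 else if i == j.+1 :> nat then sub i else 0.

Lemma trmx_tridiag sub dia sup : (tridiag sub dia sup)^T = tridiag sup dia sub.
Proof.
apply/matrixP => i j; rewrite !mxE.
have [->//|_] := eqVneq (i : nat) j.
by do 2 case: eqP => //; lia.
Qed.

Lemma tridiag_mulmx sub dia sup m (i j : 'I_n) :
  (tridiag sub dia sup *m \matrix_(k, l) m k l) i j =
  (if (0 < i)%N then sub i * m i.-1 j else 0) + dia i * m i j
  + (if (i.+1 < n)%N then sup i.+1 * m i.+1 j else 0).
Proof.
rewrite mxE (eq_bigr (fun k : 'I_n =>
    (if k == i :> nat then dia k * m k j else 0)
  + (if k == i.+1 :> nat then sup k * m k j else 0)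
  + (if i == k.+1 :> nat then sub i * m k j else 0))) => [|k _]; last first.
  rewrite !mxE; have [->|_] := eqVneq (k : nat) i; first by rewrite !ifN ?addr0 //; lia.
  have [->|_] := eqVneq (k : nat) i.+1; first by rewrite ifN ?add0r ?addr0 //; lia.
  by case: ifP; rewrite ?mul0r ?add0r.
rewrite !big_split /= -!big_mkcond (big_ord1_eq _ (fun k => dia k * m k j)).
rewrite (big_ord1_eq _ (fun k => sup k * m k j)) ltn_ord addrC addrA.
case: (nat_of_ord i) (ltn_ord i) => [|i'] lt_in; first by rewrite big_pred0.
under eq_bigl => k do rewrite eqSS eq_sym.
by rewrite (big_ord1_eq _ (fun k => sub i'.+1 * m k j)) ltnW.
Qed.
End Tridiagonal.

Arguments tridiag {R n} sub dia sup.

Lemma mulmx_tridiag (R : comPzSemiRingType) n (sub dia sup : nat -> R)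
    (m : nat -> nat -> R) (i j : 'I_n) :
  (\matrix_(k, l) m k l *m tridiag sub dia sup) i j =
  (if (0 < j)%N then m i j.-1 * sup j else 0) + m i j * dia j
  + (if (j.+1 < n)%N then m i j.+1 * sub j.+1 else 0).
Proof.
transitivity ((tridiag sup dia sub *m \matrix_(k, l) m l k) j i).
  rewrite -[tridiag sup _ _]trmx_tridiag.
  rewrite (_ : \matrix_(k, l) m l k = (\matrix_(k, l) m k l)^T).
    by rewrite -trmx_mul [RHS]mxE.
  by apply/matrixP => k l; rewrite !mxE.
by rewrite (tridiag_mulmx _ _ _ (fun k l => m l k)) ![_ * m _ _]mulrC.
Qed.

Lemma diag_mx_if (V : nmodType) n (f : 'I_n -> V) :
  \matrix_(i, j) (if i == j then f i else 0) = diag_mx (\row_i f i).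
Proof. by apply/matrixP => i j; rewrite !mxE; case: eqP => [->|]; rewrite ?mulr1n. Qed.

Lemma diag_mx_unit (F : fieldType) n (d : 'rV[F]_n) :
  (forall i, d 0 i != 0) -> diag_mx d \in unitmx.
Proof.
move=> d_neq0; rewrite unitmxE det_diag unitfE prodf_seq_neq0.
by apply/allP => i _; apply: d_neq0.
Qed.

Lemma sqrtC_natM (C : numClosedFieldType) (a b c d : nat) :
  (a * b = c * c * d)%N -> sqrtC a%:R * sqrtC b%:R = c%:R * sqrtC d%:R :> C.
Proof.
have sqrtC_natrM p q : sqrtC (p * q)%:R = sqrtC p%:R * sqrtC q%:R :> C.
  by rewrite natrM sqrtCM ?qualifE /= ?ler0n.
by move=> e; rewrite -sqrtC_natrM e sqrtC_natrM natrM -expr2 sqrCK ?ler0n.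
Qed.

Lemma beta_addr1 : beta + 1 = 'i.
Proof. by rewrite /beta addrAC addNr add0r. Qed.

Lemma beta_neq0 : beta != 0.
Proof.
apply/eqP => beta0; have := @sqrCi algC.
by rewrite -beta_addr1 beta0 add0r expr1n => /eqP; rewrite -addr_eq0 -mulr2n pnatr_eq0.
Qed.

(* The coefficient of x^i in (beta - x)^j. *)
Definition refl_coef i j : algC := (- beta) ^- i * 'C(j, i)%:R * beta ^+ j.

Lemma refl_coef_bin_sum n m i q : (n < m)%N ->
  \sum_(k < m) refl_coef i k * ('C(n, k) * 'C(n - k, q))%:R * 'i ^+ k
  = ('C(n, i) * 'C(n - i, q))%:R * (- 'i) ^+ (n - q).
Proof.
move=> lt_nm.
transitivity ((- beta) ^- i *
    \sum_(k < m) ('C(k, i) * 'C(n, k) * 'C(n - k, q))%:R * (beta * 'i) ^+ k).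
  rewrite mulr_sumr; apply: eq_bigr => k _; rewrite /refl_coef exprMn !natrM.
  by move: (_ ^- i) => u; ring.
have beta_i1 : beta * 'i + 1 = - 'i.
  by rewrite /beta mulrDl mulN1r -expr2 sqrCi subrK.
have beta_i : (- beta)^-1 * (beta * 'i) = - 'i.
  by rewrite invrN mulNr mulrA mulVf ?beta_neq0 ?mul1r.
rewrite sum_bin_trinomial_exp // beta_i1.
have [le_iqn | lt_n_iq] := leqP (i + q) n; last first.
  rewrite (_ : 'C(n, i) * 'C(n - i, q) = 0)%N ?mul0r ?mulr0 //.
  have [le_in | lt_ni] := leqP i n; last by rewrite bin_small.
  by rewrite (@bin_small (n - i)) ?muln0 //; lia.
rewrite (_ : n - q = i + (n - i - q))%N; last by lia.
rewrite exprD -[in (- 'i) ^+ i]beta_i -exprVn !exprMn.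
by move: (- beta)^-1 => v; ring.
Qed.

(* Entry (i, j) of [scaled_H_refl_mx] below, divided by (-beta)^-i beta^j, in terms of
   x = C(j,i), y = C(j,i-1), z = C(j,i+1), w = C(j-1,i), v = C(j+1,i) and b = beta. *)
Lemma three_term_identity (F : fieldType) (b I J M x y z w v : F) :
  b != 0 -> (b + 1) ^+ 2 = -1 ->
  (I + 1) * z = (J - I) * x -> J * w = (J - I) * x -> v = x + y ->
  (J - I + 1) * y = I * x ->
  (M - I) * b * y + (2 * I + 1 - M) * x + (I + 1) * (- b)^-1 * z =
  b^-1 * J * w + (b + 1) * (2 * J + 1 - M) * x + (M - J - 1) * b * v.
Proof.
move=> b_neq0 b1_sqr Ez Ew -> Ey; apply/eqP; rewrite -subr_eq0; apply/eqP.
transitivity ((- b)^-1 * ((I + 1) * z - (J - I) * x) - b^-1 * (J * w - (J - I) * x)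
  + b * ((J - I + 1) * y - I * x) + x * (I - J) * b^-1 * ((b + 1) ^+ 2 + 1)).
  by field; rewrite oppr_eq0 b_neq0.
by rewrite Ez Ew Ey b1_sqr !subrr addNr; ring.
Qed.

Section ExceptionalPoint.
Variable N : nat.

Definition diag_AO k : algC := (2 * k + 1)%:R - N%:R.

Lemma refl_coef_three_term i j :
  (if (0 < i)%N then - (N%:R - i%:R) * refl_coef i.-1 j else 0)
  + diag_AO i * refl_coef i j + i.+1%:R * refl_coef i.+1 j
  = (if (0 < j)%N then refl_coef i j.-1 * j%:R else 0)
  + refl_coef i j * ('i * diag_AO j) + refl_coef i j.+1 * (N%:R - j.+1%:R).
Proof.
have b_neq0 := beta_neq0.
pose P := (- beta) ^- i * beta ^+ j.
pose x : algC := 'C(j, i)%:R; pose y : algC := if i is i'.+1 then 'C(j, i')%:R else 0.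
pose z : algC := 'C(j, i.+1)%:R; pose w : algC := 'C(j.-1, i)%:R.
pose v : algC := 'C(j.+1, i)%:R.
have sub_term : (if (0 < i)%N then - (N%:R - i%:R) * refl_coef i.-1 j else 0)
    = P * ((N%:R - i%:R) * beta * y).
  rewrite /P /y /refl_coef; case: (i) => [|i'] /=; first by rewrite !mulr0.
  by rewrite -!exprVn exprS; move: (_ ^+ i') => u; field.
have diag_term : diag_AO i * refl_coef i j = P * ((2 * i%:R + 1 - N%:R) * x).
  by rewrite /P /x /refl_coef /diag_AO natrD natrM; ring.
have sup_term : i.+1%:R * refl_coef i.+1 j = P * ((i%:R + 1) * (- beta)^-1 * z).
  by rewrite /P /z /refl_coef -!exprVn exprS -addn1 natrD; ring.
have sup_term' : (if (0 < j)%N then refl_coef i j.-1 * j%:R else 0) = P * (beta^-1 * j%:R * w).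
  rewrite /P /w /refl_coef; case: (j) => [|j'] /=; first by rewrite mulr0 !mul0r mulr0.
  by rewrite exprS; move: (_ ^- i) => u; field.
have diag_term' : refl_coef i j * ('i * diag_AO j)
    = P * ((beta + 1) * (2 * j%:R + 1 - N%:R) * x).
  by rewrite /P /x /refl_coef /diag_AO beta_addr1 natrD natrM; ring.
have sub_term' : refl_coef i j.+1 * (N%:R - j.+1%:R) = P * ((N%:R - j%:R - 1) * beta * v).
  by rewrite /P /v /refl_coef exprS -addn1 natrD; ring.
rewrite sub_term diag_term sup_term sup_term' diag_term' sub_term' -!mulrDr; congr (_ * _).
apply: three_term_identity => //.
- by rewrite beta_addr1 sqrCi.
- by rewrite natr1 natr_mul_bin_left.
- exact: natr_mul_bin_down.
- by rewrite /v /x /y; case: (i) => [|i']; rewrite ?bin0 ?addr0 // binS natrD.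
- rewrite /x /y; case: (i) => [|i']; first by rewrite mulr0 mul0r.
  by rewrite natr_mul_bin_left -natr1; ring.
Qed.

Definition scaled_H (s : algC) (dia : nat -> algC) : 'M[algC]_N :=
  tridiag (fun k => s * (N%:R - k%:R)) dia (fun k => k%:R).

Definition sqrt_tridiag (s : algC) (dia : nat -> algC) : 'M[algC]_N :=
  \matrix_(i, j)
    if i == j :> nat then dia i
    else if j == i.+1 :> nat then sqrtC ((j * (N - j))%:R)
    else if i == j.+1 :> nat then s * sqrtC ((i * (N - i))%:R)
    else 0.

Lemma H_AO_sqrt_tridiag : H_AO N = sqrt_tridiag (-1) diag_AO.
Proof. by apply/matrixP => i j; rewrite !mxE mulN1r. Qed.

Lemma H_BH_sqrt_tridiag : H_BH N = sqrt_tridiag 1 (fun k => 'i * diag_AO k).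
Proof. by apply/matrixP => i j; rewrite !mxE mul1r. Qed.

Lemma sqrt_bin_neq0 k : (k < N)%N -> sqrtC ('C(N.-1, k))%:R != 0 :> algC.
Proof. by move=> lt_kN; rewrite sqrtC_eq0 pnatr_eq0 -lt0n bin_gt0; lia. Qed.

Lemma Cmx_unit : Cmx N \in unitmx.
Proof. by rewrite /Cmx diag_mx_if diag_mx_unit // => k; rewrite mxE sqrt_bin_neq0. Qed.

Lemma sqrt_bin_succ k : (k.+1 < N)%N ->
  sqrtC ('C(N.-1, k))%:R * sqrtC ((k.+1 * (N - k.+1))%:R)
  = k.+1%:R * sqrtC ('C(N.-1, k.+1))%:R :> algC.
Proof.
move=> lt_kN; apply: sqrtC_natM; have := mul_bin_left N.-1 k.
rewrite (_ : N.-1 - k = N - k.+1)%N; [nia | lia].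
Qed.

Lemma sqrt_bin_pred k : (k.+1 < N)%N ->
  sqrtC ('C(N.-1, k.+1))%:R * sqrtC ((k.+1 * (N - k.+1))%:R)
  = (N - k.+1)%:R * sqrtC ('C(N.-1, k))%:R :> algC.
Proof.
move=> lt_kN; apply: sqrtC_natM; have := mul_bin_left N.-1 k.
rewrite (_ : N.-1 - k = N - k.+1)%N; [nia | lia].
Qed.

Lemma Cmx_sqrt_tridiag s dia :
  Cmx N *m sqrt_tridiag s dia = scaled_H s dia *m Cmx N.
Proof.
rewrite /Cmx diag_mx_if mul_diag_mx mul_mx_diag; apply/matrixP => i j; rewrite !mxE.
have [->|_] := eqVneq (i : nat) j; first by rewrite mulrC.
have [ji|_] := eqVneq (j : nat) i.+1.
  by rewrite ji sqrt_bin_succ // -ji.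
have [ij|_] := eqVneq (i : nat) j.+1; last by rewrite mulr0 mul0r.
by rewrite ij mulrCA sqrt_bin_pred -ij // natrB ?mulrA // ltnW.
Qed.

Definition refl_mx : 'M[algC]_N := \matrix_(i, j) refl_coef i j.

Lemma scaled_H_refl_mx :
  scaled_H (-1) diag_AO *m refl_mx = refl_mx *m scaled_H 1 (fun k => 'i * diag_AO k).
Proof.
apply/matrixP => i j; rewrite tridiag_mulmx mulmx_tridiag mulN1r mul1r.
have -> : (if (i.+1 < N)%N then i.+1%:R * refl_coef i.+1 j else 0)
    = i.+1%:R * refl_coef i.+1 j.
  case: ltnP => // le_Ni.
  by rewrite /refl_coef bin_small ?(mulr0, mul0r) //; have := ltn_ord j; lia.
have -> : (if (j.+1 < N)%N then refl_coef i j.+1 * (N%:R - j.+1%:R) else 0)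
    = refl_coef i j.+1 * (N%:R - j.+1%:R).
  case: ltnP => // le_Nj.
  by rewrite (_ : j.+1 = N) ?subrr ?mulr0 //; apply/eqP; rewrite eqn_leq ltn_ord.
exact: refl_coef_three_term.
Qed.

Lemma Cmx_Smx : Cmx N *m Smx N = refl_mx *m Cmx N.
Proof.
rewrite /Smx /Bmx /Amx /Cmx !diag_mx_if; apply/matrixP => i j.
rewrite !(mul_diag_mx, mul_mx_diag) !mxE /refl_coef.
have [le_ij | lt_ji] := leqP i j; last by rewrite (bin_small lt_ji) !(mulr0, mul0r).
set c := sqrtC _; set r := sqrtC _.
have sqrt_R : c * r = 'C(j, i)%:R * sqrtC ('C(N.-1, j))%:R.
  by apply: sqrtC_natM; rewrite mulnCA -mul_bin_trinomial // mulnCA mulnC.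
by transitivity ((- beta) ^- i * (c * r) * beta ^+ j); [ring | rewrite sqrt_R; ring].
Qed.

Lemma H_AO_Smx : H_AO N *m Smx N = Smx N *m H_BH N.
Proof.
apply: (can_inj (mulKmx Cmx_unit)).
rewrite mulmxA H_AO_sqrt_tridiag Cmx_sqrt_tridiag -mulmxA Cmx_Smx mulmxA.
rewrite scaled_H_refl_mx -mulmxA -Cmx_sqrt_tridiag -H_BH_sqrt_tridiag.
by rewrite mulmxA -Cmx_Smx -mulmxA.
Qed.

Lemma Smx_mul_Q_BH : Smx N *m Q_BH N = Q_AO N.
Proof.
apply: (can_inj (mulKmx Cmx_unit)).
rewrite mulmxA Cmx_Smx -mulmxA /Q_BH /Q_AO /Dmx /Gmx /Cmx /Fmx !diag_mx_if.
apply/matrixP => i q; rewrite !(mul_diag_mx, mul_mx_diag) !mxE.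
under eq_bigr do rewrite !mxE.
have sqrt_bin_sqr k :
    sqrtC ('C(N.-1, k))%:R * sqrtC ('C(N.-1, k))%:R = 'C(N.-1, k)%:R :> algC.
  by rewrite -expr2 sqrtCK.
have lt_nN : (N.-1 < N)%N by have := ltn_ord i; lia.
rewrite (_ : N - q - 1 = N.-1 - q)%N; last by lia.
transitivity ((\sum_(k < N) refl_coef i k * ('C(N.-1, k) * 'C(N.-1 - k, q))%:R * 'i ^+ k)
    * ((- 'i) ^+ (N.-1 - q) * (N.-1 - q)`!%:R)).
  by rewrite mulr_suml; apply: eq_bigr => k _; rewrite natrM -[in RHS]sqrt_bin_sqr; ring.
rewrite refl_coef_bin_sum // natrM -[in LHS]sqrt_bin_sqr -!mulrA.
by do 3 congr (_ * _); rewrite mulrA -exprMn mulrNN mulCii.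
Qed.
End ExceptionalPoint.

Lemma Pmx_unit N : Pmx N \in unitmx.
Proof.
pose rev_perm := perm (@rev_ord_inj N).
suff : (col_perm rev_perm (Pmx N))^T \in unitmx.
  by rewrite unitmx_tr col_permE unitmx_mul => /andP[].
rewrite unitmxE det_trig; last first.
  apply/is_trig_mxP => a b lt_ab; rewrite !mxE permE /= bin_small //.
  by have := ltn_ord b; lia.
rewrite big1 ?unitr1 // => k _; rewrite !mxE permE /=.
by rewrite (_ : N - k.+1 = N.-1 - k)%N ?binn //; lia.
Qed.

Lemma Q_AO_unit N : Q_AO N \in unitmx.
Proof.
rewrite /Q_AO !unitmx_mul Pmx_unit Cmx_unit /Fmx diag_mx_if diag_mx_unit // => k.
by rewrite mxE mulf_neq0 ?signr_eq0 // pnatr_eq0 -lt0n fact_gt0.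
Qed.

Theorem mainTheorem3 (N : nat) (hN : (2 <= N)%N) :
  [/\ Smx N \in unitmx,
      H_AO N = Smx N *m H_BH N *m invmx (Smx N),
      Q_BH N \in unitmx
    & Smx N = Q_AO N *m invmx (Q_BH N)].
Proof.
(* The identities hold for every N. *)
have /andP[S_unit Q_BH_unit] : (Smx N \in unitmx) && (Q_BH N \in unitmx).
  by rewrite -unitmx_mul Smx_mul_Q_BH Q_AO_unit.
split=> //; first by rewrite -H_AO_Smx mulmxK.
by rewrite -Smx_mul_Q_BH mulmxK.
Qed.
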